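(* Let $(X,\mathcal B,\mu)$ be a probability space and $G$ an lcsc Abelian group with a translation-invariant metric $d$. Let $\varphi_n,\psi_n\colon X\to G$ be measurable maps taking values in a compact set $C\subset G$, with each $\psi_n$ taking values in a fixed finite set $F\subset C$. Assume that, weakly, $(\varphi_n)_*\mu\to\nu$, $(\psi_n)_*\mu\to\kappa$ and $(\varphi_n+\psi_n)_*\mu\to\rho$. Then for each $h_0\in\operatorname{supp}\kappa$ there exists $g_0\in\operatorname{supp}\nu$ with $h_0+g_0\in\operatorname{supp}\rho$; and for each $g_0\in\operatorname{supp}\nu$ there exists $h_0\in\operatorname{supp}\kappa$ with $h_0+g_0\in\operatorname{supp}\rho$. *)

From HB Require Import structures.
From mathcomp Require Import all_boot all_algebra.
From mathcomp Require Import all_classical all_reals all_analysis.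
Set Implicit Arguments. Unset Strict Implicit. Unset Printing Implicit Defensive.
Import GRing.Theory Num.Theory numFieldTopology.Exports.
Local Open Scope classical_set_scope.
Local Open Scope ring_scope.

(* To build
   the Borel sigma-algebra the library needs a pointed carrier; we use the
   alias [pt G] of G pointed at 0 (the point plays no mathematical role). *)
Definition pt (G : topologicalZmodType) : Type := G.
HB.instance Definition _ (G : topologicalZmodType) := Choice.copy (pt G) G.
HB.instance Definition _ (G : topologicalZmodType) :=
  isPointed.Build (pt G) (0 : G).

Definition borel (G : topologicalZmodType) : Type :=
  @g_sigma_algebraType (pt G) (@open G).

Definition lcsc (G : topologicalZmodType) : Prop :=
  locally_compact [set: G] /\ @second_countable G.

Definition translation_invariant_metric (R : realType) (G : topologicalZmodType)
    (d : G -> G -> R) : Prop :=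
  [/\ (forall x y, 0 <= d x y),
      (forall x y, d x y = 0 <-> x = y),
      (forall x y, d x y = d y x),
      (forall x y z, d x z <= d x y + d y z) &
      (forall x y z, d (x + z) (y + z) = d x y)] /\
      (forall (x : G) (A : set G),
          nbhs x A <-> exists2 e : R, 0 < e & [set y | d x y < e] `<=` A).

Definition weak_cvg (R : realType) (G : topologicalZmodType)
    (m : nat -> probability (borel G) R) (nu : probability (borel G) R) : Prop :=
  forall f : G -> R, continuous f -> (exists M : R, forall x, `|f x| <= M) ->
    ((fun n => \int[m n]_x (f x)%:E) @ \oo --> \int[nu]_x (f x)%:E)%E.

Definition msupp (R : realType) (G : topologicalZmodType)
    (nu : probability (borel G) R) : set G :=
  [set g | forall U : set G, open U -> U g -> (0 < nu U)%E].

From HB Require Import structures.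
From mathcomp Require Import all_boot all_algebra.
From mathcomp Require Import all_classical all_reals all_analysis.
From mathcomp Require Import lra ring measurable_realfun.
Import order.Order.TTheory GRing.Theory Num.Theory numFieldTopology.Exports.
Set Implicit Arguments.
Unset Strict Implicit.

Local Open Scope classical_set_scope.
Local Open Scope ring_scope.

(* Suppose h0 lies in supp kappa but h0 + g lies outside supp rho for every g
   in supp nu.  Then every g in C is the centre of a ball B(g, r_g) such that
   either the probability that phi_n visits B(g, r_g) or the probability that
   chi_n visits B(h0 + g, r_g) tends to 0.  Cover the compact set C by finitely
   many balls B(g, r_g / 2) and let r be the least of their radii.  When
   psi_n is in B(h0, r) and phi_n in B(g, r_g / 2), translation invariance puts
   chi_n = phi_n + psi_n in B(h0 + g, r_g); so the probability that psi_n is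
   in B(h0, r) tends to 0, contradicting h0 in supp kappa.  The second claim is
   the same argument with phi and psi exchanged, since psi_n also takes values
   in C.
   Weak convergence is used only through the continuous bumps
   max(0, 1 - d(x, .) / r), which carry the positivity of a limit measure on a
   ball, or its vanishing on an open set, over to the approximating laws. *)

Lemma continuous_borel_measurable (R : realType) (G : topologicalZmodType)
    (f : G -> R) :
  continuous f -> measurable_fun [set: borel G] f.
Proof.
move=> cf; apply: (measurability _ (RGenOpens.measurableE R)).
move=> _ [_ [a [b ->]] <-]; rewrite setTI; apply: sub_sigma_algebra.
by move: cf => /continuousP; apply; exact: interval_open.
Qed.

Section TranslationInvariantMetric.
Variables (R : realType) (G : topologicalZmodType) (d : G -> G -> R).
Hypothesis Hd : translation_invariant_metric d.

Definition dball (x : G) (e : R) := [set y | d x y < e].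

Lemma dist_ge0 x y : 0 <= d x y. Proof. by case: Hd => -[]. Qed.
Lemma distxx x : d x x = 0. Proof. by case: Hd => -[_ dP _ _ _] _; apply/dP. Qed.
Lemma distC x y : d x y = d y x. Proof. by case: Hd => -[]. Qed.
Lemma dist_triangle x y z : d x z <= d x y + d y z. Proof. by case: Hd => -[]. Qed.
Lemma distDr z x y : d (x + z) (y + z) = d x y. Proof. by case: Hd => -[]. Qed.
Lemma nbhs_dballP x A : nbhs x A <-> exists2 e : R, 0 < e & dball x e `<=` A.
Proof. by case: Hd => _; apply. Qed.

Lemma dball_center x e : 0 < e -> dball x e x.
Proof. by rewrite /dball /= distxx. Qed.

Lemma dball_open x e : open (dball x e).
Proof.
rewrite openE => y xy; apply/nbhs_dballP; exists (e - d x y); first by rewrite subr_gt0.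
move=> z yz; have := dist_triangle x y z; move: xy yz; rewrite /dball /=; lra.
Qed.

Lemma dballD x y a b r s :
  dball x r a -> dball y s b -> dball (x + y) (r + s) (a + b).
Proof.
rewrite /dball /= => xa yb; apply: le_lt_trans (dist_triangle _ (a + y) _) _.
by rewrite distDr [a + y]addrC [a + b]addrC distDr ltrD.
Qed.

Lemma continuous_dist x : continuous (d x).
Proof.
move=> y; apply/cvgrPdist_lt => e e0.
have : nbhs y (dball y e) by apply/nbhs_dballP; exists e.
apply: filterS => z; rewrite /dball /= => yz.
have := dist_triangle x y z; have := dist_triangle x z y; rewrite (distC z y).
by rewrite ltr_norml; lra.
Qed.

Definition bump x r y := Num.max 0 (1 - d x y / r).

Lemma continuous_bump x r : continuous (bump x r).
Proof.
move=> y; apply: (@continuous_max _ _ (cst 0 : G -> R^o) (fun z => 1 - d x z / r)).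
  exact: cst_continuous.
apply: continuousB; first exact: cst_continuous.
by apply: continuousM; [exact: continuous_dist | exact: cst_continuous].
Qed.

Lemma bump_ge0 x r y : 0 <= bump x r y.
Proof. by rewrite /bump le_max lexx. Qed.

Lemma bump_le1 x r y : 0 < r -> bump x r y <= 1.
Proof. by move=> r0; rewrite /bump ge_max ler01 gerBl divr_ge0 ?dist_ge0 ?ltW. Qed.

Lemma bump_bounded x r : 0 < r -> exists M : R, forall y, `|bump x r y| <= M.
Proof. by move=> r0; exists 1 => y; rewrite ger0_norm ?bump_ge0 ?bump_le1. Qed.

Lemma bump_eq0 x r y : 0 < r -> ~ dball x r y -> bump x r y = 0.
Proof.
move=> r0 /negP; rewrite -leNgt => rxy.
by rewrite /bump max_l // subr_le0 ler_pdivlMr // mul1r.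
Qed.

Lemma bump_ge_half x r y : 0 < r -> dball x (r / 2) y -> 2^-1 <= bump x r y.
Proof.
move=> r0 xy; rewrite /bump le_max; apply/orP; right.
have : d x y / r < 2^-1 by rewrite ltr_pdivrMr //; move: xy; rewrite /dball /=; lra.
lra.
Qed.

Lemma dball_measurable x e : @measurable _ (borel G) (dball x e).
Proof. by apply: sub_sigma_algebra; exact: dball_open. Qed.

End TranslationInvariantMetric.

Section IntegralBounds.
Variables (R : realType) (dT : measure_display) (T : measurableType dT).
Variable m : {measure set T -> \bar R}.

Lemma integral_le_measure (f : T -> R) (A : set T) :
  measurable A -> measurable_fun [set: T] f ->
  (forall y, 0 <= f y <= 1) -> (forall y, ~ A y -> f y = 0) ->
  (\int[m]_x (f x)%:E <= m A)%E.
Proof.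
move=> mA mf f01 f0.
have -> : m A = (\int[m]_x (\1_A x)%:E)%E by rewrite integral_indic ?setIT.
apply: ge0_le_integral => //.
- by move=> y _; rewrite lee_fin; case/andP: (f01 y).
- exact/measurable_EFinP.
- exact/measurable_EFinP/measurable_indic.
- move=> y _; rewrite lee_fin indicE; have [Ay|nAy] := pselect (A y).
    by rewrite mem_set //; case/andP: (f01 y).
  by rewrite memNset // f0.
Qed.

Lemma measure_le_integral (f : T -> R) (A : set T) (c : R) :
  measurable A -> measurable_fun [set: T] f -> 0 <= c ->
  (forall y, 0 <= f y) -> (forall y, A y -> c <= f y) ->
  (c%:E * m A <= \int[m]_x (f x)%:E)%E.
Proof.
move=> mA mf c0 f0 fA.
have -> : (c%:E * m A = \int[m]_x (c%:E * (\1_A x)%:E))%E.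
  rewrite (@ge0_integralZl_EFin _ _ _ m setT measurableT (fun x => (\1_A x)%:E)) //.
  - by rewrite integral_indic ?setIT.
  - exact/measurable_EFinP/measurable_indic.
apply: ge0_le_integral => //.
- by move=> y _; rewrite -EFinM lee_fin mulr_ge0.
- exact/measurable_EFinP/measurable_funM/measurable_indic.
- exact/measurable_EFinP.
- move=> y _; rewrite -EFinM lee_fin indicE; have [Ay|nAy] := pselect (A y).
    by rewrite mem_set // mulr1 fA.
  by rewrite memNset // mulr0 f0.
Qed.

End IntegralBounds.

Lemma seq_pos_lower_bound (R : realDomainType) (T : eqType) (s : seq T) (r : T -> R) :
  (forall i, 0 < r i) -> exists2 m, 0 < m & forall i, i \in s -> m <= r i.
Proof.
move=> r0; elim: s => [|a s [m m0 ms]]; first by exists 1.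
exists (Num.min m (r a)); first by rewrite lt_min m0 r0.
move=> i; rewrite in_cons => /orP[/eqP ->|si]; first by rewrite ge_min lexx orbT.
by rewrite ge_min ms.
Qed.

(* [compact_cover] is stated for pointed spaces; G is pointed at 0 here. *)
Definition zero_pointed (G : topologicalZmodType) : Type := G.
HB.instance Definition _ (G : topologicalZmodType) :=
  Topological.copy (zero_pointed G) G.
HB.instance Definition _ (G : topologicalZmodType) :=
  isPointed.Build (zero_pointed G) (0 : G).

Lemma compact_dball_cover (R : realType) (G : topologicalZmodType) (d : G -> G -> R)
    (C : set G) (r : G -> R) :
  translation_invariant_metric d -> compact C -> (forall z, 0 < r z) ->
  exists s : seq G, C `<=` \big[setU/set0]_(z <- s) dball d z (r z).
Proof.
move=> Hd cC r0.
have coverC : @cover_compact (zero_pointed G) C by rewrite -compact_cover.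
have [|D _ CD] := coverC _ C _ (fun z _ => dball_open Hd z (r z)).
  by move=> z Cz; exists z => //; exact: dball_center.
by exists (finmap.enum_fset D); rewrite -bigcup_seq => g /CD [z Dz zg]; exists z.
Qed.

Section VanishingMass.
Variables (R : realType) (dX : measure_display) (X : measurableType dX).
Variable mu : probability X R.

Definition vanishing (A : nat -> set X) :=
  forall e : R, 0 < e -> \forall n \near \oo, (mu (A n) < e%:E)%E.

Lemma vanishing_sub (A B : nat -> set X) :
  (forall n, measurable (A n)) -> (forall n, measurable (B n)) ->
  (forall n, A n `<=` B n) -> vanishing B -> vanishing A.
Proof.
move=> mA mB AB vB e e0; apply: filterS (vB e e0) => n.
by apply: le_lt_trans; apply: le_measure; rewrite ?inE.
Qed.

Lemma vanishing_setU (A B : nat -> set X) :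
  (forall n, measurable (A n)) -> (forall n, measurable (B n)) ->
  vanishing A -> vanishing B -> vanishing (fun n => A n `|` B n).
Proof.
move=> mA mB vA vB e e0.
have e2 : 0 < e / 2 by rewrite divr_gt0.
apply: filterS2 (vA _ e2) (vB _ e2) => n An Bn.
apply: le_lt_trans (measureU2 _ (mA n) (mB n)) _.
by rewrite [e](splitr e) EFinD lteD.
Qed.

Lemma vanishing_bigsetU (T : eqType) (s : seq T) (A : T -> nat -> set X) :
  (forall i n, measurable (A i n)) -> (forall i, i \in s -> vanishing (A i)) ->
  vanishing (fun n => \big[setU/set0]_(i <- s) A i n).
Proof.
move=> mA; elim: s => [_ e e0|a s IHs vs].
  by apply: nearW => n; rewrite big_nil measure0 lte_fin.
under [X in vanishing X]funext => n do rewrite big_cons.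
apply: vanishing_setU.
- exact: mA.
- by move=> n; apply: bigsetU_measurable.
- by apply: vs; rewrite mem_head.
- by apply: IHs => i si; apply: vs; rewrite in_cons si orbT.
Qed.

Lemma not_vanishing (A : nat -> set X) (c : R) : 0 < c ->
  (\forall n \near \oo, (c%:E <= mu (A n))%E) -> ~ vanishing A.
Proof.
move=> c0 cA vA; have : \forall n \near \oo, False.
  by apply: filterS2 cA (vA c c0) => n /le_lt_trans/[apply]; rewrite ltxx.
by case/filter_ex.
Qed.

End VanishingMass.

Section WeakLimitSupport.
Variables (R : realType) (G : topologicalZmodType) (d : G -> G -> R).
Hypothesis Hd : translation_invariant_metric d.
Variables (dX : measure_display) (X : measurableType dX) (mu : probability X R).

Lemma preimage_dball_measurable (Y : {mfun X >-> borel G}) y r :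
  measurable (Y @^-1` dball d y r).
Proof. by apply: measurable_funPTI; exact: dball_measurable. Qed.

Lemma vanishing_off_msupp (Y : nat -> {mfun X >-> borel G})
    (m : probability (borel G) R) y :
  weak_cvg (fun n => distribution mu (Y n)) m -> ~ msupp m y ->
  exists2 r : R, 0 < r & vanishing mu (fun n => Y n @^-1` dball d y r).
Proof.
move=> wY ym.
have [U [oU Uy mU0]] : exists U : set G, [/\ open U, U y & m U = 0%E].
  apply: contrapT => noU; apply: ym => U oU Uy.
  by rewrite lt0e measure_ge0 andbT; apply/negP => /eqP mU0; apply: noU; exists U.
have /(nbhs_dballP Hd) [e e0 eU] : nbhs y U by exact: open_nbhs_nbhs.
exists (e / 2); first by rewrite divr_gt0.
have cb : continuous (bump d y e) by exact: continuous_bump.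
have mb := continuous_borel_measurable cb.
have b01 z : 0 <= bump d y e z <= 1 by rewrite bump_ge0 bump_le1.
have int0 : (\int[m]_x (bump d y e x)%:E = 0)%E.
  apply/eqP; rewrite eq_le integral_ge0 ?andbT; last by move=> z _; rewrite lee_fin bump_ge0.
  rewrite -mU0; apply: le_trans (integral_le_measure _ (dball_measurable Hd y e) mb b01
    (fun z => bump_eq0 e0)) _.
  by apply: le_measure; rewrite ?inE //; [exact: dball_measurable | exact: sub_sigma_algebra].
move=> eps eps0.
have eps2 : (0 < (eps / 2)%:E)%E by rewrite lte_fin divr_gt0.
have : \forall n \near \oo,
    (\int[distribution mu (Y n)]_x (bump d y e x)%:E < (eps / 2)%:E)%E.
  by have := wY _ cb (bump_bounded Hd y e0); rewrite int0 => /(_ _ (open_ereal_lt' eps2)).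
apply: filterS => n small_n.
have : (2^-1%:E * mu (Y n @^-1` dball d y (e / 2)) < (eps / 2)%:E)%E.
  apply: le_lt_trans small_n.
  apply: (measure_le_integral _ (dball_measurable Hd y (e / 2)) mb).
  - by rewrite invr_ge0.
  - exact: bump_ge0.
  - by move=> z; apply: bump_ge_half.
by rewrite lte_pdivrMl // -EFinM [2 * _]mulrC divfK.
Qed.

Lemma mass_near_msupp (Y : nat -> {mfun X >-> borel G})
    (m : probability (borel G) R) y r :
  weak_cvg (fun n => distribution mu (Y n)) m -> msupp m y -> 0 < r ->
  exists2 c : R, 0 < c &
    \forall n \near \oo, (c%:E <= mu (Y n @^-1` dball d y r))%E.
Proof.
move=> wY ym r0.
have cb : continuous (bump d y r) by exact: continuous_bump.
have mb := continuous_borel_measurable cb.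
have b01 z : 0 <= bump d y r z <= 1 by rewrite bump_ge0 bump_le1.
have bump_le_ball (m' : probability (borel G) R) :=
  integral_le_measure m' (dball_measurable Hd y r) mb b01 (fun z => bump_eq0 r0).
set L := (\int[m]_x (bump d y r x)%:E)%E.
have L_gt0 : (0 < L)%E.
  apply: lt_le_trans (measure_le_integral m (dball_measurable Hd y (r / 2)) mb _
    (@bump_ge0 _ _ d y r) (fun z => bump_ge_half r0)); last by rewrite invr_ge0.
  apply: mule_gt0; first by rewrite lte_fin invr_gt0.
  by apply: ym; [exact: dball_open | apply: (dball_center Hd); rewrite divr_gt0].
have L_lt_oo : (L < +oo)%E.
  apply: le_lt_trans (bump_le_ball m) (le_lt_trans _ (ltry 1)).
  by apply: probability_le1; exact: dball_measurable.
have fineL_gt0 : 0 < fine L by apply: fine_gt0; rewrite L_gt0 L_lt_oo.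
exists (fine L / 2); first by rewrite divr_gt0.
have cL : ((fine L / 2)%:E < L)%E.
  by rewrite -[X in (_ < X)%E]fineK ?lte_fin ?ge0_fin_numE ?(ltW L_gt0) //; lra.
have : \forall n \near \oo,
    ((fine L / 2)%:E < \int[distribution mu (Y n)]_x (bump d y r x)%:E)%E.
  exact: (wY _ cb (bump_bounded Hd y r0) _ (open_ereal_gt' cL)).
by apply: filterS => n /ltW /le_trans; apply; exact: bump_le_ball.
Qed.

Lemma vanishing_off_msupp_pair (Z W : nat -> {mfun X >-> borel G})
    (mZ mW : probability (borel G) R) z w :
  weak_cvg (fun n => distribution mu (Z n)) mZ ->
  weak_cvg (fun n => distribution mu (W n)) mW ->
  ~ (msupp mZ z /\ msupp mW w) ->
  exists r : R, 0 < r /\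
    (vanishing mu (fun n => Z n @^-1` dball d z r) \/
     vanishing mu (fun n => W n @^-1` dball d w r)).
Proof.
move=> wZ wW zw; have [zZ|zZ] := pselect (msupp mZ z).
- have [r r0 vW] := vanishing_off_msupp wW (fun wW => zw (conj zZ wW)).
  by exists r; split; [|right].
- by have [r r0 vZ] := vanishing_off_msupp wZ zZ; exists r; split; [|left].
Qed.

Lemma msupp_add_witness (Y Z W : nat -> {mfun X >-> borel G}) (C : set G)
    (mY mZ mW : probability (borel G) R) y0 :
  compact C -> (forall n x, C (Z n x)) -> (forall n x, W n x = Y n x + Z n x) ->
  weak_cvg (fun n => distribution mu (Y n)) mY ->
  weak_cvg (fun n => distribution mu (Z n)) mZ ->
  weak_cvg (fun n => distribution mu (W n)) mW ->
  msupp mY y0 -> exists2 z, msupp mZ z & msupp mW (y0 + z).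
Proof.
move=> cC ZC WE wY wZ wW y0Y; apply: contrapT => no_witness.
have no_pair z : ~ (msupp mZ z /\ msupp mW (y0 + z)).
  by move=> [zZ zW]; apply: no_witness; exists z.
have [r rP] := choice (fun z => vanishing_off_msupp_pair wZ wW (no_pair z)).
have r2_gt0 z : 0 < r z / 2 by rewrite divr_gt0 //; case: (rP z).
have [s Cs] := @compact_dball_cover _ _ d C (fun z => r z / 2) Hd cC r2_gt0.
have [m m0 ms] := seq_pos_lower_bound s r2_gt0.
have [c c0 Yc] := mass_near_msupp wY y0Y m0.
apply: (not_vanishing c0 Yc).
have mI n z e : measurable (Y n @^-1` dball d y0 m `&` Z n @^-1` dball d z e).
  by apply: measurableI; exact: preimage_dball_measurable.
apply: (@vanishing_sub _ _ _ _ _ (fun n => \big[setU/set0]_(z <- s)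
    (Y n @^-1` dball d y0 m `&` Z n @^-1` dball d z (r z / 2)))).
- by move=> n; exact: preimage_dball_measurable.
- by move=> n; apply: bigsetU_measurable => z _; exact: mI.
- move=> n x Yx; have := Cs _ (ZC n x); rewrite -!bigcup_seq => -[z sz zx].
  by exists z.
apply: vanishing_bigsetU => [z n|z sz]; first exact: mI.
have mzs := ms z sz; case: (rP z) => _ [] vz; apply: vanishing_sub vz => n.
- exact: mI.
- exact: preimage_dball_measurable.
- by move=> x [_]; rewrite /dball /=; lra.
- exact: mI.
- exact: preimage_dball_measurable.
- move=> x [y0x zx]; rewrite /= WE; have := dballD Hd y0x zx.
  by rewrite /dball /=; lra.
Qed.

End WeakLimitSupport.

Theorem lemma2p4 (R : realType) (dX : measure_display) (X : measurableType dX)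
    (mu : probability X R) (G : topologicalZmodType) (d : G -> G -> R)
    (phi psi chi : nat -> {mfun X >-> borel G})
    (C F : set G) (nu kappa rho : probability (borel G) R) :
  lcsc G ->
  translation_invariant_metric d ->
  compact C ->
  finite_set F -> F `<=` C ->
  (forall n x, C (phi n x)) ->
  (forall n x, F (psi n x)) ->
  (forall n x, chi n x = @GRing.add G (phi n x) (psi n x)) ->
  weak_cvg (fun n => distribution mu (phi n)) nu ->
  weak_cvg (fun n => distribution mu (psi n)) kappa ->
  weak_cvg (fun n => distribution mu (chi n)) rho ->
  (forall h0, msupp kappa h0 ->
     exists2 g0, msupp nu g0 & msupp rho (@GRing.add G h0 g0)) /\
  (forall g0, msupp nu g0 ->
     exists2 h0, msupp kappa h0 & msupp rho (@GRing.add G h0 g0)).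
Proof.
move=> _ Hd cC _ FC phiC psiF chiE wphi wpsi wchi; split.
- move=> h0 h0K; apply: (msupp_add_witness Hd cC phiC _ wpsi wphi wchi h0K).
  by move=> n x; rewrite chiE addrC.
- move=> g0 g0N.
  have psiC n x : C (psi n x) by apply/FC/psiF.
  have [h hK hR] := msupp_add_witness Hd cC psiC chiE wphi wpsi wchi g0N.
  by exists h; rewrite // addrC.
Qed.
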